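(* Let $\ell:\mathbb{R}^{m\times n}\to\mathbb{R}$ be differentiable and $L$-smooth with respect to the Frobenius norm, and suppose $\|\nabla \ell(W)\|_F\le G$ for all $W$. Let $U_r\in\mathbb{R}^{m\times r}$ have orthonormal columns and let $\Pi_{U_r}=U_rU_r^\top$ be the fixed rank-$r$ orthogonal projector. Fix a step size $\eta>0$ and an initial matrix $W_0\in\mathbb{R}^{m\times n}$. Define the unprojected gradient descent path $Z_0=W_0$, $Z_{t+1}=Z_t-\eta\nabla \ell(Z_t)$; the accumulated-projection iterate \[ W_T = W_0 - \eta\,\Pi_{U_r}\Bigl(\sum_{t=0}^{T-1}\nabla \ell(Z_t)\Bigr); \] and the sequential-projection iterates $P_0=W_0$, $P_{t+1}=P_t-\eta\,\Pi_{U_r}\nabla \ell(P_t)$. Then for any $T$, \[ \|W_T-P_T\|_F \le \frac{\eta^2}{2}\,L G\,T(T-1) + O\bigl((\eta L T)^3\bigr). \]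
   Context: A differentiable function $\ell:\mathbb{R}^{m\times n}\to\mathbb{R}$ is $L$-smooth with respect to the Frobenius norm $\|\cdot\|_F$ if $\|\nabla \ell(W_1)-\nabla \ell(W_2)\|_F \le L\,\|W_1-W_2\|_F$ for all $W_1,W_2\in\mathbb{R}^{m\times n}$. The term $O((\eta L T)^3)$ denotes a higher-order remainder as $\eta L T\to 0$. *)

From HB Require Import structures.
From mathcomp Require Import all_boot all_order all_algebra.
From mathcomp Require Import reals.
Set Implicit Arguments. Unset Strict Implicit. Unset Printing Implicit Defensive.
Import Order.TTheory GRing.Theory Num.Theory.
Local Open Scope ring_scope.

Section Defs.
Variables (R : realType) (m n r : nat).

Definition frob_inner (A B : 'M[R]_(m, n)) : R :=
  \sum_(i < m) \sum_(j < n) A i j * B i j.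
Definition frob (A : 'M[R]_(m, n)) : R := Num.sqrt (frob_inner A A).

Definition is_gradient (ell : 'M[R]_(m, n) -> R) (grad : 'M[R]_(m, n) -> 'M[R]_(m, n)) :=
  forall W (eps : R), 0 < eps -> exists2 delta : R, 0 < delta &
    forall H, frob H < delta ->
      `| ell (W + H) - ell W - frob_inner (grad W) H | <= eps * frob H.

Definition L_smooth (grad : 'M[R]_(m, n) -> 'M[R]_(m, n)) (L : R) :=
  forall W1 W2, frob (grad W1 - grad W2) <= L * frob (W1 - W2).

Definition proj (U : 'M[R]_(m, r)) (X : 'M[R]_(m, n)) : 'M[R]_(m, n) :=
  U *m U^T *m X.

Fixpoint gd_path (grad : 'M[R]_(m, n) -> 'M[R]_(m, n)) (eta : R) (W0 : 'M[R]_(m, n))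
    (t : nat) : 'M[R]_(m, n) :=
  match t with
  | 0 => W0
  | t'.+1 => gd_path grad eta W0 t' - eta *: grad (gd_path grad eta W0 t')
  end.

Definition acc_proj_iter (grad : 'M[R]_(m, n) -> 'M[R]_(m, n)) (U : 'M[R]_(m, r))
    (eta : R) (W0 : 'M[R]_(m, n)) (T : nat) : 'M[R]_(m, n) :=
  W0 - eta *: proj U (\sum_(t < T) grad (gd_path grad eta W0 t)).

Fixpoint seq_proj_iter (grad : 'M[R]_(m, n) -> 'M[R]_(m, n)) (U : 'M[R]_(m, r))
    (eta : R) (W0 : 'M[R]_(m, n)) (t : nat) : 'M[R]_(m, n) :=
  match t with
  | 0 => W0
  | t'.+1 => seq_proj_iter grad U eta W0 t'
             - eta *: proj U (grad (seq_proj_iter grad U eta W0 t'))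
  end.

End Defs.

(* The gap between accumulated and sequential projection is driven by the
   drift of the sequential iterates P_t away from the unprojected path Z_t.
   Since both Pi_U and its complement are Frobenius contractions, one step
   moves Z_t - P_t by at most eta (G + L |Z_t - P_t|); this gives
   |Z_t - P_t| <= eta G t + O(eta^2 L G t^2).  The accumulated iterate W_t
   differs from P_t only through Pi_U applied to grad Z_t - grad P_t, of size
   at most L |Z_t - P_t|, and summing over t < T yields
   eta^2 L G T (T - 1) / 2 plus a term of order eta^3 L^2 G T^3. *)

From HB Require Import structures.
From mathcomp Require Import all_boot all_order all_algebra.
From mathcomp Require Import reals.
From mathcomp Require Import ring lra.
Set Implicit Arguments. Unset Strict Implicit. Unset Printing Implicit Defensive.
Import Order.TTheory GRing.Theory Num.Theory.
Local Open Scope ring_scope.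

Lemma subrACA (V : zmodType) (x y z w : V) : (x - y) - (z - w) = (x - z) - (y - w).
Proof. by rewrite !opprB addrACA [RHS]addrACA [- z + _]addrC. Qed.

Section Frobenius.
Variables (R : realType) (m n : nat).
Implicit Types (A B C : 'M[R]_(m, n)) (a : R).

Lemma frob_innerC A B : frob_inner A B = frob_inner B A.
Proof. by apply: eq_bigr => i _; apply: eq_bigr => j _; rewrite mulrC. Qed.

Lemma frob_innerDl A B C : frob_inner (A + B) C = frob_inner A C + frob_inner B C.
Proof.
rewrite /frob_inner -big_split; apply: eq_bigr => i _.
by rewrite -big_split; apply: eq_bigr => j _; rewrite mxE mulrDl.
Qed.

Lemma frob_innerZl a A B : frob_inner (a *: A) B = a * frob_inner A B.
Proof.
rewrite /frob_inner mulr_sumr; apply: eq_bigr => i _.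
by rewrite mulr_sumr; apply: eq_bigr => j _; rewrite mxE mulrA.
Qed.

Lemma frob_innerNl A B : frob_inner (- A) B = - frob_inner A B.
Proof. by rewrite -scaleN1r frob_innerZl mulN1r. Qed.

Lemma frob_innerDr A B C : frob_inner C (A + B) = frob_inner C A + frob_inner C B.
Proof. by rewrite frob_innerC frob_innerDl !(frob_innerC C). Qed.

Lemma frob_innerZr a A B : frob_inner B (a *: A) = a * frob_inner B A.
Proof. by rewrite frob_innerC frob_innerZl frob_innerC. Qed.

Lemma frob_innerNr A B : frob_inner B (- A) = - frob_inner B A.
Proof. by rewrite frob_innerC frob_innerNl frob_innerC. Qed.

Lemma frob_inner_ge0 A : 0 <= frob_inner A A.
Proof. by apply: sumr_ge0 => i _; apply: sumr_ge0 => j _; rewrite -expr2 sqr_ge0. Qed.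

Lemma frob_inner_eq0 A : frob_inner A A = 0 -> A = 0.
Proof.
move=> A0; apply/matrixP => i j; rewrite mxE.
have sqr_ge0' (x : R) : 0 <= x * x by rewrite -expr2 sqr_ge0.
have row0 : \sum_(k < n) A i k * A i k = 0.
  by move/psumr_eq0P: A0; apply=> // k _; apply: sumr_ge0.
have /eqP : A i j * A i j = 0 by move/psumr_eq0P: row0; apply.
by rewrite mulf_eq0 orbb => /eqP.
Qed.

Lemma frob_ge0 A : 0 <= frob A.
Proof. exact: sqrtr_ge0. Qed.

Lemma sqr_frob A : frob A ^+ 2 = frob_inner A A.
Proof. by rewrite sqr_sqrtr // frob_inner_ge0. Qed.

Lemma frob_inner_CauchySchwarz A B : frob_inner A B <= frob A * frob B.
Proof.
have [AA0|AA0] := eqVneq (frob_inner A A) 0.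
  by rewrite (frob_inner_eq0 AA0) -(scale0r 0) frob_innerZl mul0r mulr_ge0 ?frob_ge0.
have AA_gt0 : 0 < frob_inner A A by rewrite lt_def AA0 frob_inner_ge0.
have := frob_inner_ge0 (frob_inner A A *: B - frob_inner A B *: A).
rewrite !(frob_innerDl, frob_innerDr, frob_innerNl, frob_innerNr,
          frob_innerZl, frob_innerZr) (frob_innerC B A) => expand_ge0.
have AB_sqr : frob_inner A B ^+ 2 <= frob_inner A A * frob_inner B B.
  by have := frob_inner_ge0 B; nra.
rewrite /frob -sqrtrM ?frob_inner_ge0 //.
by apply: le_trans (ler_norm _) _; rewrite -sqrtr_sqr ler_wsqrtr.
Qed.

Lemma ler_frobD A B : frob (A + B) <= frob A + frob B.
Proof.
have := frob_inner_CauchySchwarz A B => CS.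
have sqr_le : frob_inner (A + B) (A + B) <= (frob A + frob B) ^+ 2.
  by rewrite !(frob_innerDl, frob_innerDr) (frob_innerC B A) sqrrD !sqr_frob; lra.
apply: le_trans (ler_wsqrtr sqr_le) _.
by rewrite sqrtr_sqr ger0_norm // addr_ge0 ?frob_ge0.
Qed.

Lemma frobZ a A : frob (a *: A) = `|a| * frob A.
Proof.
by rewrite /frob frob_innerZl frob_innerZr mulrA -expr2 sqrtrM ?sqr_ge0 // sqrtr_sqr.
Qed.

Lemma frobN A : frob (- A) = frob A.
Proof. by rewrite -scaleN1r frobZ normrN normr1 mul1r. Qed.

Lemma ler_frobB A B : frob (A - B) <= frob A + frob B.
Proof. by rewrite -(frobN B) ler_frobD. Qed.

Lemma frob0 : frob (0 : 'M[R]_(m, n)) = 0.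
Proof. by rewrite -(scale0r 0) frobZ normr0 mul0r. Qed.

Lemma frob_inner_trace A B : frob_inner A B = \tr (A^T *m B).
Proof.
rewrite /frob_inner /mxtrace exchange_big; apply: eq_bigr => j _.
by rewrite !mxE; apply: eq_bigr => i _; rewrite !mxE.
Qed.

End Frobenius.

Section Projector.
Variables (R : realType) (m n r : nat) (U : 'M[R]_(m, r)).
Hypothesis U_orthonormal : U^T *m U = 1%:M.
Implicit Types X Y : 'M[R]_(m, n).

Lemma frob_inner_proj X Y : frob_inner (proj U X) Y = frob_inner X (proj U Y).
Proof. by rewrite !frob_inner_trace /proj !trmx_mul trmxK !mulmxA. Qed.

Lemma projB X Y : proj U (X - Y) = proj U X - proj U Y.
Proof. exact: mulmxBr. Qed.

Lemma projD X Y : proj U (X + Y) = proj U X + proj U Y.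
Proof. exact: mulmxDr. Qed.

Lemma proj_idem X : proj U (proj U X) = proj U X.
Proof. by rewrite /proj !mulmxA -(mulmxA U _ U) U_orthonormal mulmx1. Qed.

Lemma frob_proj_pythagoras X :
  frob_inner X X = frob_inner (proj U X) (proj U X)
                   + frob_inner (X - proj U X) (X - proj U X).
Proof.
have orth : frob_inner (proj U X) (X - proj U X) = 0.
  by rewrite frob_inner_proj projB proj_idem subrr -(scale0r 0) frob_innerZr mul0r.
rewrite -{1 2}(subrK (proj U X) X) addrC.
move: orth; move: (X - proj U X) => Y orth.
by rewrite !(frob_innerDl, frob_innerDr) orth frob_innerC orth addr0 add0r.
Qed.

Lemma ler_frob_proj X : frob (proj U X) <= frob X.
Proof.
by rewrite /frob ler_wsqrtr // [leRHS]frob_proj_pythagoras lerDl frob_inner_ge0.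
Qed.

Lemma ler_frob_projC X : frob (X - proj U X) <= frob X.
Proof.
by rewrite /frob ler_wsqrtr // [leRHS]frob_proj_pythagoras lerDr frob_inner_ge0.
Qed.

End Projector.

Section ProjectedDescent.
Variables (R : realType) (m n r : nat).
Variables (grad : 'M[R]_(m, n) -> 'M[R]_(m, n)) (L G eta : R).
Variables (U : 'M[R]_(m, r)) (W0 : 'M[R]_(m, n)).
Hypotheses (L_ge0 : 0 <= L) (grad_smooth : L_smooth grad L).
Hypothesis grad_bounded : forall W, frob (grad W) <= G.
Hypotheses (U_orthonormal : U^T *m U = 1%:M) (eta_ge0 : 0 <= eta).

Local Notation Z := (gd_path grad eta W0).
Local Notation P := (seq_proj_iter grad U eta W0).
Local Notation W := (acc_proj_iter grad U eta W0).
Local Notation drift t := (frob (Z t - P t)).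
Local Notation grad_gap t := (frob (grad (Z t) - proj U (grad (P t)))).

Lemma G_ge0 : 0 <= G.
Proof. exact: le_trans (frob_ge0 _) (grad_bounded W0). Qed.

Lemma frob_grad_proj_gap_smooth X Y :
  frob (grad X - proj U (grad Y)) <= G + L * frob (X - Y).
Proof.
rewrite -[grad X](subrK (proj U (grad X))) -addrA -projB.
apply: le_trans (ler_frobD _ _) (lerD _ _).
  exact: le_trans (ler_frob_projC U_orthonormal _) (grad_bounded _).
exact: le_trans (ler_frob_proj U_orthonormal _) (grad_smooth _ _).
Qed.

Lemma frob_grad_proj_gap_bounded X Y : frob (grad X - proj U (grad Y)) <= G + G.
Proof.
apply: le_trans (ler_frobB _ _) (lerD (grad_bounded _) _).
exact: le_trans (ler_frob_proj U_orthonormal _) (grad_bounded _).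
Qed.

Lemma drift0 : drift 0 = 0.
Proof. by rewrite subrr frob0. Qed.

Lemma driftS t : drift t.+1 <= drift t + eta * grad_gap t.
Proof.
rewrite /= subrACA -scalerBr.
by apply: le_trans (ler_frobB _ _) _; rewrite frobZ ger0_norm.
Qed.

Lemma drift_linear t : drift t <= 2 * eta * G * t%:R.
Proof.
elim: t => [|t IH]; first by rewrite drift0 mulr0.
apply: le_trans (driftS t) _; rewrite -natr1.
by have := ler_wpM2l eta_ge0 (frob_grad_proj_gap_bounded (Z t) (P t)); lra.
Qed.

Lemma drift_quadratic t :
  drift t <= eta * G * t%:R + 2 * eta ^+ 2 * L * G * t%:R ^+ 2.
Proof.
elim: t => [|t IH]; first by rewrite drift0 !mulr0 expr0n /= mulr0 addr0.
apply: le_trans (driftS t) _; rewrite -natr1.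
have gap := ler_wpM2l eta_ge0 (frob_grad_proj_gap_smooth (Z t) (P t)).
have lin := ler_wpM2l (mulr_ge0 eta_ge0 L_ge0) (drift_linear t).
have slack : 0 <= eta ^+ 2 * L * G * (t%:R + 1).
  by rewrite !mulr_ge0 ?exprn_ge0 ?G_ge0 // addr_ge0.
by rewrite mulrDr in gap; lra.
Qed.

Lemma acc_seq_gapS t :
  W t.+1 - P t.+1 = (W t - P t) - eta *: proj U (grad (Z t) - grad (P t)).
Proof.
by rewrite /acc_proj_iter big_ord_recr /= projB projD scalerDr scalerBr opprD addrA subrACA.
Qed.

Lemma acc_seq_gap_le t :
  frob (W t - P t) <= eta ^+ 2 * L * G * (t%:R * (t%:R - 1)) / 2
                      + 2 * eta ^+ 3 * L ^+ 2 * G * t%:R ^+ 3.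
Proof.
elim: t => [|t IH].
  by rewrite /acc_proj_iter /= big_ord0 /proj mulmx0 scaler0 subr0 subrr frob0
             !(mulr0, mul0r) expr0n /= !mulr0 addr0.
rewrite acc_seq_gapS; apply: le_trans (ler_frobB _ _) _.
rewrite frobZ ger0_norm // -natr1.
have step := ler_wpM2l eta_ge0
  (le_trans (ler_frob_proj U_orthonormal _) (grad_smooth (Z t) (P t))).
have quad := ler_wpM2l (mulr_ge0 eta_ge0 L_ge0) (drift_quadratic t).
have t_ge0 : (0 : R) <= t%:R by [].
have slack : 0 <= eta ^+ 3 * L ^+ 2 * G * (3 * t%:R + 1).
  by rewrite !mulr_ge0 ?exprn_ge0 ?G_ge0 //; lra.
nra.
Qed.

End ProjectedDescent.

Theorem theorem2 (R : realType) (m n r : nat)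
    (ell : 'M[R]_(m, n) -> R) (grad : 'M[R]_(m, n) -> 'M[R]_(m, n))
    (L G : R) (U : 'M[R]_(m, r)) (W0 : 'M[R]_(m, n)) :
  is_gradient ell grad ->
  0 <= L ->
  L_smooth grad L ->
  (forall W, frob (grad W) <= G) ->
  U^T *m U = 1%:M ->
  exists (C delta : R), 0 < delta /\
    forall (eta : R) (T : nat), 0 < eta -> eta * L * T%:R <= delta ->
      frob (acc_proj_iter grad U eta W0 T - seq_proj_iter grad U eta W0 T)
      <= eta ^+ 2 / 2 * L * G * (T%:R * (T%:R - 1)) + C * (eta * L * T%:R) ^+ 3.
Proof.
move=> _ L_ge0 grad_smooth grad_bounded U_orthonormal.
(* Only the Lipschitz gradient matters, so [ell] is not used; the bound holds
   for every step size, and [C = 2 G / L] is junk when [L = 0], where the cubic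
   term vanishes anyway. *)
exists (2 * G / L), 1; split=> // eta T eta_gt0 _.
apply: le_trans (acc_seq_gap_le W0 L_ge0 grad_smooth grad_bounded U_orthonormal
                   (ltW eta_gt0) T) _.
have [->|L_neq0] := eqVneq L 0.
  by rewrite !(mulr0, mul0r, expr0n) /= !(mulr0, mul0r, addr0).
have -> : 2 * G / L * (eta * L * T%:R) ^+ 3 = 2 * eta ^+ 3 * L ^+ 2 * G * T%:R ^+ 3.
  by field.
lra.
Qed.
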